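(* Let $P$ be a finite $(3+1)$-free poset, decomposed into clone sets $C_1,\dots,C_r$ and tangles $T_1,\dots,T_s$. Then there exists a listing $(X_1,\dots,X_{r+s})$ of the clone sets and tangles of $P$ such that for any two vertices $a\in X_i$ and $b\in X_j$ with $i\neq j$, we have $a<b$ exactly when (i) $\ell(a)\le\ell(b)-2$, or (ii) $\ell(a)=\ell(b)-1$ and $i<j$.
   Context: A poset $P$ is $(3+1)$-free if there are no $a,b,c,d\in P$ with $a<b<c$ and $d$ incomparable to each of $a,b,c$. For $a\in P$ let $D_a=\{x\in P:x<a\}$, $U_a=\{x\in P:x>a\}$. Write $a\mathrel{\top}b$ if neither of $D_a,D_b$ contains the other, $a\mathrel{\bot}b$ if neither of $U_a,U_b$ contains the other, and $a\approx b$ if $D_a=D_b$ and $U_a=U_b$. A top of a tangle is a subset $A\subseteq P$ with $|A|\ge2$ that is a connected component of the graph on $P$ with edges $\{a,b\}$ for $a\mathrel{\top}b$; a bottom of a tangle is defined in the same way using $\bot$. A top $A$ and bottom $B$ are matched if there are distinct $a_1,a_2\in A$, $b_1,b_2\in B$ with $b_1<a_1$, $b_2<a_2$ and the pairs $\{a_1,a_2\},\{b_1,b_2\},\{b_1,a_2\},\{b_2,a_1\}$ incomparable; in a $(3+1)$-free poset this is a perfect matching between tops and bottoms of tangles. A tangle is a matched pair $(A,B)$, identified with the set $A\cup B$. A clone set is an equivalence class of $\approx$ restricted to the vertices lying in no tangle. Levels: $L_1$ is the set of minimal elements of $P$, and $L_{k+1}$ is the set of minimal elements of $P\setminus(L_1\cup\dots\cup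 L_k)$; $\ell(a)$ denotes the index $k$ with $a\in L_k$. *)

From mathcomp Require Import all_boot all_order.
Set Implicit Arguments. Unset Strict Implicit. Unset Printing Implicit Defensive.
Import Order.Theory.
Local Open Scope order_scope.

Section PosetDefs.
Context {disp : Order.disp_t} {T : finPOrderType disp}.

Definition free31 : bool :=
  ~~ [exists a : T, exists b : T, exists c : T, exists d : T,
        [&& a < b, b < c, d >< a, d >< b & d >< c]].

Definition Dset (a : T) : {set T} := [set x | x < a].
Definition Uset (a : T) : {set T} := [set x | a < x].

Definition topr : rel T := fun a b =>
  ~~ (Dset a \subset Dset b) && ~~ (Dset b \subset Dset a).
Definition botr : rel T := fun a b =>
  ~~ (Uset a \subset Uset b) && ~~ (Uset b \subset Uset a).
Definition approx (a b : T) : bool := (Dset a == Dset b) && (Uset a == Uset b).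

Definition is_component (e : rel T) (A : {set T}) : bool :=
  [exists x in A, A == [set y | connect e x y]].

Definition is_top (A : {set T}) : bool := (1 < #|A|)%N && is_component topr A.
Definition is_bot (B : {set T}) : bool := (1 < #|B|)%N && is_component botr B.

Definition matched (A B : {set T}) : bool :=
  [exists a1 in A, exists a2 in A, exists b1 in B, exists b2 in B,
     [&& a1 != a2, b1 != b2, b1 < a1, b2 < a2,
         a1 >< a2, b1 >< b2, b1 >< a2 & b2 >< a1]].

Definition is_tangle (X : {set T}) : bool :=
  [exists A : {set T}, exists B : {set T},
     [&& is_top A, is_bot B, matched A B & X == A :|: B]].

Definition in_tangle (x : T) : bool := [exists X : {set T}, is_tangle X && (x \in X)].

Definition is_clone (C : {set T}) : bool :=
  [exists x, ~~ in_tangle x && (C == [set y | ~~ in_tangle y & approx x y])].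

Definition minset (S : {set T}) : {set T} := [set x in S | [forall y in S, ~~ (y < x)]].

Fixpoint upto (k : nat) : {set T} :=
  match k with
  | 0 => set0
  | k'.+1 => upto k' :|: minset (~: upto k')
  end.

(* L k = L_k  (L 0 is empty; L_(k+1) = minimal elements of P \ (L_1 ∪ ... ∪ L_k)) *)
Definition L (k : nat) : {set T} :=
  match k with 0 => set0 | k'.+1 => minset (~: upto k') end.

(* ℓ(a): the index k with a ∈ L_k (every element lies in some L_k, k <= #|T|) *)
Definition level (a : T) : nat := find (fun k => a \in L k) (iota 0 #|T|.+2).

End PosetDefs.

(* In a (3+1)-free poset an element two levels below another one lies below it, so only
   comparabilities between consecutive levels matter.  On a single level, "some element
   below x' is not below x, or some element above x is not above x'" is, by
   (3+1)-freeness, a strict total order on the parts meeting that level; [rank x] measures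
   the position of the part of x in it.  Every element y above the first level gets as parent
   a lower cover of maximal rank.  Then an element x one level below y, in another part,
   lies below y exactly when rank x <= rank (parent y), and parents are monotone in rank.
   Hence listing the parts by the lexicographic order of the rank sequences along parent
   chains, a top of a tangle being represented by its parent (which lies in the bottom of
   that tangle), puts the part of x before the part of y exactly when x < y. *)

From Pilot Require Import Defs.
From mathcomp Require Import all_boot all_order zify.
Set Implicit Arguments. Unset Strict Implicit. Unset Printing Implicit Defensive.
Import Order.Theory.
Local Open Scope order_scope.

Section Levels.
Variables (disp : Order.disp_t) (T : finPOrderType disp).
Implicit Types x y z : T.

Lemma upto_subset m n : (m <= n)%N -> upto (T:=T) m \subset upto n.
Proof.
elim: n => [|n IH]; first by rewrite leqn0 => /eqP->.
rewrite leq_eqVlt ltnS => /predU1P[->//|/IH mn].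
exact: subset_trans mn (subsetUl _ _).
Qed.

Lemma mem_uptoS k x : (x \in upto k.+1) = [forall y, (y < x) ==> (y \in upto k)].
Proof.
elim: k x => [|k IH] x.
  by rewrite /= set0U setC0 !inE; apply/forallP/forallP => H y; have := H y; rewrite !inE.
have -> : upto k.+2 = upto k.+1 :|: Defs.minset (~: upto k.+1) by [].
rewrite inE; case: (boolP (x \in upto k.+1)) => xk.
  rewrite orTb; apply/esym/forallP => y; apply/implyP => yx.
  move: xk; rewrite IH => /forallP/(_ y); rewrite yx.
  exact: (subsetP (subsetUl _ _)).
rewrite orFb inE in_setC xk.
by apply/forallP/forallP => H y; have := H y; rewrite in_setC; case: (y < x); case: (y \in _).
Qed.

Lemma mem_upto_Dset x : x \in upto #|Dset x|.+1.
Proof.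
elim: {x}#|Dset x| {-2}x (leqnn #|Dset x|) => [|n IH] x Dx; rewrite mem_uptoS;
  apply/forallP => y; apply/implyP => yx.
  by move: Dx; rewrite leqn0 cards_eq0 => /eqP Dx0; have := in_set0 y; rewrite -Dx0 inE yx.
have Dyx : Dset y \proper Dset x.
  rewrite properEneq; apply/andP; split.
    apply/eqP => Dyx; have : y \in Dset x by rewrite inE.
    by rewrite -Dyx inE ltxx.
  by apply/subsetP => z; rewrite !inE => /lt_trans; apply.
apply: subsetP (upto_subset _) _ (IH y _).
  exact: proper_card Dyx.
by rewrite -ltnS (leq_trans (proper_card Dyx)).
Qed.

Lemma mem_upto_card x : x \in upto #|T|.
Proof.
apply: subsetP (upto_subset _) _ (mem_upto_Dset x).
rewrite -[#|T|]cardsT proper_card // properT; apply/eqP => Dx.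
have : x \in Dset x by rewrite Dx.
by rewrite inE ltxx.
Qed.

Lemma mem_LS k x : (x \in L k.+1) = (x \in upto k.+1) && (x \notin upto k).
Proof. by rewrite /= !inE; case: (x \in upto k); rewrite ?andbT. Qed.

Lemma uptoE m x : (x \in upto m) = (level x <= m)%N.
Proof.
have [n xn n_min] := ex_minnP (ex_intro (fun n => x \in upto n) _ (mem_upto_card x)).
suff -> : level x = n by apply/idP/idP => [/n_min //|/upto_subset/subsetP]; apply.
have n_small : (n < #|T|.+2)%N := leqW (n_min _ (mem_upto_card x)).
have xLk k : (x \in L k) = (k == n).
  case: k => [|k]; first by rewrite inE; case: n xn {n_min n_small} => [|n]; rewrite ?inE.
  rewrite mem_LS; case: (ltngtP k.+1 n) => [kn|nk|kn].
  - by apply/negbTE; rewrite negb_and; apply/orP; left; apply/negP => /n_min; rewrite leqNgt kn.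
  - by rewrite (subsetP (upto_subset (nk : n <= k)%N) _ xn) andbF.
  - by subst n; rewrite xn; apply/negP => /n_min; rewrite ltnn.
rewrite /level; have hasL : has (fun k => x \in L k) (iota 0 #|T|.+2).
  by apply/hasP; exists n; rewrite ?mem_iota ?xLk.
have := nth_find 0 hasL; rewrite nth_iota ?xLk => [/eqP //|].
by rewrite -[X in (_ < X)%N](size_iota 0) -has_find.
Qed.

Lemma level_gt0 x : (0 < level x)%N.
Proof.
rewrite lt0n; apply/negP => /eqP lx0.
by have := leqnn (level x); rewrite {2}lx0 -uptoE inE.
Qed.

Lemma lt_level x y : x < y -> (level x < level y)%N.
Proof.
have := leqnn (level y); rewrite -uptoE; case: (level y) (level_gt0 y) => // k _.
by rewrite mem_uptoS => /forallP/(_ x) /implyP H /H; rewrite uptoE.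
Qed.

Lemma level_cover k y : level y = k.+2 -> exists2 z, z < y & level z = k.+1.
Proof.
move=> ly; have : y \notin upto k.+1 by rewrite uptoE ly ltnn.
rewrite mem_uptoS negb_forall => /existsP[z]; rewrite negb_imply uptoE -ltnNge => /andP[zy kz].
by exists z => //; apply/eqP; rewrite eqn_leq kz -ltnS -ly lt_level.
Qed.

Lemma nlt_level x y : (level y <= level x)%N -> ~~ (x < y).
Proof. by move=> yx; apply/negP => /lt_level; rewrite ltnNge yx. Qed.

Lemma level_le_Dset x y : Dset x \subset Dset y -> (level x <= level y)%N.
Proof.
move=> Dxy; rewrite -uptoE; have := leqnn (level y); rewrite -uptoE.
case: (level y) (level_gt0 y) => // k _; rewrite !mem_uptoS => /forallP yk.
apply/forallP => z; apply/implyP => zx; apply: (implyP (yk z)).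
by have := subsetP Dxy z; rewrite !inE; apply.
Qed.

Lemma level_Dset x y : Dset x = Dset y -> level x = level y.
Proof. by move=> Dxy; apply/anti_leq; rewrite !level_le_Dset ?Dxy. Qed.

End Levels.

Section LexiCat.
Variables (d : Order.disp_t) (T : orderType d).
Implicit Types s t : seqlexi T.

Lemma ltxi_cat s1 s2 t1 t2 : size s1 = size s2 ->
  (s1 ++ t1 < s2 ++ t2 :> seqlexi T) = (s1 < s2) || (s1 == s2) && (t1 < t2).
Proof.
elim: s1 s2 => [|x s1 IH] [|y s2] //= [/IH IHs]; rewrite !ltxi_cons IHs eqseq_cons.
by case: (ltgtP x y).
Qed.

Lemma lexi_cat s1 s2 t1 t2 : size s1 = size s2 ->
  (s1 ++ t1 <= s2 ++ t2 :> seqlexi T) = (s1 < s2) || (s1 == s2) && (t1 <= t2).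
Proof.
elim: s1 s2 => [|x s1 IH] [|y s2] //= [/IH IHs]; rewrite !lexi_cons ltxi_cons IHs eqseq_cons.
by case: (ltgtP x y).
Qed.

End LexiCat.

Lemma sorted_relpre_nth (I : Type) (d : Order.disp_t) (K : porderType d) (f : I -> K)
    (s : seq I) (x0 : I) i j :
  sorted (relpre f <=%O) s -> (i <= j)%N -> (j < size s)%N -> f (nth x0 s i) <= f (nth x0 s j).
Proof.
move=> ss ij js; have f_trans : transitive (relpre f <=%O) by move=> y x z; apply: le_trans.
by apply: (sorted_leq_nth f_trans (fun x => lexx (f x)) x0 ss); rewrite ?inE ?(leq_ltn_trans ij js).
Qed.

Section Components.
Variables (disp : Order.disp_t) (T : finPOrderType disp) (e : rel T).
Hypothesis e_sym : symmetric e.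
Implicit Types (A B : {set T}) (x y : T).

Lemma is_component_connect x : is_component e [set y | connect e x y].
Proof. by apply/existsP; exists x; rewrite inE connect0 /=. Qed.

Lemma componentE A x : is_component e A -> x \in A -> A = [set y | connect e x y].
Proof.
case/existsP => x0 /andP[_ /eqP->]; rewrite inE => x0x.
apply/setP => y; rewrite !inE; apply/idP/idP; last exact: connect_trans.
by apply: connect_trans; rewrite (sym_connect_sym e_sym).
Qed.

Lemma component_connect A x y : is_component e A -> x \in A -> connect e x y -> y \in A.
Proof. by move=> cA xA xy; rewrite (componentE cA xA) inE. Qed.

Lemma component_closed A x y : is_component e A -> x \in A -> e x y -> y \in A.
Proof. by move=> cA xA /connect1; apply: component_connect. Qed.

Lemma component_eq A B x : is_component e A -> is_component e B -> x \in A -> x \in B -> A = B.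
Proof. by move=> cA cB xA xB; rewrite (componentE cA xA) (componentE cB xB). Qed.

Lemma component_nbr A x : is_component e A -> (1 < #|A|)%N -> x \in A -> exists y, e x y.
Proof.
move=> cA /card_gt1P[a [b [aA bA ab]]] xA.
have [y yA yx] : exists2 y, y \in A & y != x.
  by case: (eqVneq a x) => [<-|ax]; [exists b; rewrite 1?eq_sym | exists a].
move: yA; rewrite (componentE cA xA) inE => /connectP[[|z p] /=].
  by move=> _ yx'; rewrite yx' eqxx in yx.
by case/andP=> xz _ _; exists z.
Qed.

Lemma component_ind A (P : T -> Prop) x : is_component e A -> x \in A -> P x ->
  (forall u v, u \in A -> P u -> e u v -> P v) -> forall y, y \in A -> P y.
Proof.
move=> cA xA Px step y; rewrite (componentE cA xA) inE => /connectP[p + ->].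
elim: p x xA Px => [|z p IH] x xA Px //= /andP[xz]; apply: IH (step _ _ xA Px xz).
exact: component_closed xz.
Qed.

Lemma component_const (U : Type) (f : T -> U) A x y : is_component e A ->
  (forall u v, u \in A -> e u v -> f u = f v) -> x \in A -> y \in A -> f x = f y.
Proof.
move=> cA fe xA; apply: (component_ind (P := fun y => f x = f y) cA xA) => // u v uA ->.
exact: fe.
Qed.

End Components.

Section ThreePlusOneFree.
Variables (disp : Order.disp_t) (T : finPOrderType disp).
Hypothesis free : free31 (T := T).
Implicit Types (a b c d w x y z : T) (A B S : {set T}).

Lemma comparable_level x y : (level x <= level y)%N -> (x >=< y) = (x <= y).
Proof.
move=> lxy; apply/orP/idP => [[//|]|]; last by left.
rewrite le_eqVlt => /predU1P[->|/lt_level]; first exact: lexx.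
by rewrite ltnNge lxy.
Qed.

Lemma free31P a b c d : a < b -> b < c -> d >< a -> d >< b -> d >< c -> False.
Proof.
move=> ab bc da db dc; move/existsP: free; apply.
by exists a; apply/existsP; exists b; apply/existsP; exists c; apply/existsP; exists d; apply/and5P.
Qed.

Lemma free31_lt a b c d : a < b -> b < c -> (level d <= level a)%N -> d < c.
Proof.
move=> ab bc da; have lab := lt_level ab; have lbc := lt_level bc.
suff dc : d <= c by rewrite lt_neqAle dc andbT; apply/eqP => dc'; move: da; rewrite dc'; lia.
apply/negPn/negP => ndc; apply: (free31P (d := d) ab bc); rewrite !comparable_level; try lia.
- by apply: contra ndc => /le_trans; apply; exact: ltW (lt_trans ab bc).
- by apply: contra ndc => /le_trans; apply; exact: ltW.
Qed.

Lemma incomparable_ltn_level x y : (level x < level y)%N -> ~~ (x < y) -> x >< y.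
Proof.
move=> lxy nxy; rewrite comparable_level ?(ltnW lxy) // le_eqVlt (negbTE nxy) orbF.
by apply: contraTneq lxy => ->; rewrite ltnn.
Qed.

Lemma incomparable_eq_level x y : level x = level y -> x != y -> x >< y.
Proof. by move=> lxy xy; rewrite comparable_level ?lxy // le_eqVlt negb_or xy nlt_level ?lxy. Qed.

Lemma free31_level a b c d : level b = level d -> a < b -> b < c -> (a < d) || (d < c).
Proof.
move=> lbd ab bc; have lab := lt_level ab; have lbc := lt_level bc.
apply/negPn/negP => /norP[nad ndc]; apply: (free31P (d := d) ab bc).
- by rewrite comparable_sym incomparable_ltn_level // -lbd.
- by apply: incomparable_eq_level => //; apply: contraNneq nad => ->.
- by rewrite incomparable_ltn_level // -lbd.
Qed.

Lemma level_gap_lt a b : (level a + 2 <= level b)%N -> a < b.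
Proof.
move=> gap; have la := level_gt0 a.
have [z1 z1b lz1] := @level_cover _ _ (level b - 2) b ltac:(lia).
have [z2 z2z1 lz2] := @level_cover _ _ (level b - 3) z1 ltac:(lia).
by apply: free31_lt z2z1 z1b _; lia.
Qed.

(** * Crossings and tangles *)

Definition crossing w y w' y' := [&& w < y, w' < y', ~~ (w < y') & ~~ (w' < y)].

Lemma crossingC w y w' y' : crossing w y w' y' = crossing w' y' w y.
Proof. by rewrite /crossing; case: (w < y); case: (w' < y'); case: (w < y'); case: (w' < y). Qed.

Lemma toprP y y' : reflect (exists w w', crossing w y w' y') (topr y y').
Proof.
apply: (iffP andP) => [[/subsetPn[w wy nwy'] /subsetPn[w' w'y' nw'y]]|
                        [w [w' /and4P[wy w'y' nwy' nw'y]]]].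
  by exists w, w'; rewrite !inE in wy nwy' w'y' nw'y; apply/and4P.
by split; apply/subsetPn; [exists w | exists w']; rewrite !inE.
Qed.

Lemma botrP w w' : reflect (exists y y', crossing w y w' y') (botr w w').
Proof.
apply: (iffP andP) => [[/subsetPn[y wy nw'y] /subsetPn[y' w'y' nwy']]|
                        [y [y' /and4P[wy w'y' nwy' nw'y]]]].
  by exists y, y'; rewrite !inE in wy nw'y w'y' nwy'; apply/and4P.
by split; apply/subsetPn; [exists y | exists y']; rewrite !inE.
Qed.

Lemma topr_sym : symmetric (topr (T := T)).
Proof. by move=> x y; rewrite /topr andbC. Qed.

Lemma botr_sym : symmetric (botr (T := T)).
Proof. by move=> x y; rewrite /botr andbC. Qed.

Lemma toprxx y : topr y y = false.
Proof. by rewrite /topr subxx. Qed.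

Lemma botrxx w : botr w w = false.
Proof. by rewrite /botr subxx. Qed.

Lemma crossing_topr w y w' y' : crossing w y w' y' -> topr y y'.
Proof. by move=> cr; apply/toprP; exists w, w'. Qed.

Lemma crossing_botr w y w' y' : crossing w y w' y' -> botr w w'.
Proof. by move=> cr; apply/botrP; exists y, y'. Qed.

Lemma crossing_level w y w' y' : crossing w y w' y' ->
  [/\ level y = level y', level w = level w' & level y = (level w).+1].
Proof.
case/and4P=> /lt_level wy /lt_level w'y'.
by move=> /(contra (@level_gap_lt w y')) nwy' /(contra (@level_gap_lt w' y)); split; lia.
Qed.

Lemma topr_level y y' : topr y y' -> level y = level y'.
Proof. by case/toprP => w [w' /crossing_level[]]. Qed.

Lemma botr_level w w' : botr w w' -> level w = level w'.
Proof. by case/botrP => y [y' /crossing_level[]]. Qed.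

Lemma topr_Uset y y' : topr y y' -> Uset y = Uset y'.
Proof.
case/toprP => w [w' cr]; have [lyy' _ _] := crossing_level cr.
case/and4P: cr => wy w'y' nwy' nw'y.
apply/setP => c; rewrite !inE; apply/idP/idP => [yc|y'c].
  by have := free31_level lyy' wy yc; rewrite (negbTE nwy').
by have := free31_level (esym lyy') w'y' y'c; rewrite (negbTE nw'y).
Qed.

Lemma botr_Dset w w' : botr w w' -> Dset w = Dset w'.
Proof.
case/botrP => y [y' cr]; have [_ lww' _] := crossing_level cr.
case/and4P: cr => wy w'y' nwy' nw'y.
apply/setP => a; rewrite !inE; apply/idP/idP => [aw|aw'].
  by have := free31_level lww' aw wy; rewrite (negbTE nw'y) orbF.
by have := free31_level (esym lww') aw' w'y'; rewrite (negbTE nwy') orbF.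
Qed.

Lemma topr_botr x y z : topr x y -> botr x z -> False.
Proof.
move=> xy xz; have Uxy := topr_Uset xy; have Dxz := botr_Dset xz.
have /botr_Dset Dyz : botr y z by rewrite /botr -Uxy.
by move: xy; rewrite /topr Dxz -Dyz subxx.
Qed.

Lemma crossing_top_connect w1 y w2 y' w3 w4 y'' :
  crossing w1 y w2 y' -> crossing w3 y w4 y'' -> connect botr w1 w3.
Proof.
move=> /and4P[w1y w2y' nw1y' nw2y] /and4P[w3y w4y'' nw3y'' nw4y].
have cross (u v u' v' : T) : u < v -> u' < v' -> ~~ (u < v') -> ~~ (u' < v) -> botr u u'.
  by move=> *; apply/botrP; exists v, v'; apply/and4P.
have [w1y''|nw1y''] := boolP (w1 < y''); last first.
  apply: (connect_trans (connect1 (cross _ _ _ _ w1y w4y'' nw1y'' nw4y))).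
  by apply: connect1; rewrite botr_sym; apply: cross w3y w4y'' nw3y'' nw4y.
have [w3y'|nw3y'] := boolP (w3 < y'); first exact/connect1/(cross _ _ _ _ w1y'' w3y').
apply: (connect_trans (connect1 (cross _ _ _ _ w1y w2y' nw1y' nw2y))).
by apply/connect1/(cross _ _ _ _ w2y' w3y).
Qed.

Lemma crossing_bot_connect w y1 w' y2 y3 w'' y4 :
  crossing w y1 w' y2 -> crossing w y3 w'' y4 -> connect topr y1 y3.
Proof.
move=> /and4P[wy1 w'y2 nwy2 nw'y1] /and4P[wy3 w''y4 nwy4 nw''y3].
have cross (u v u' v' : T) : u < v -> u' < v' -> ~~ (u < v') -> ~~ (u' < v) -> topr v v'.
  by move=> *; apply/toprP; exists u, u'; apply/and4P.
have [w''y1|nw''y1] := boolP (w'' < y1); last first.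
  apply: (connect_trans (connect1 (cross _ _ _ _ wy1 w''y4 nwy4 nw''y1))).
  by apply: connect1; rewrite topr_sym; apply: cross wy3 w''y4 nwy4 nw''y3.
have [w'y3|nw'y3] := boolP (w' < y3); first exact/connect1/(cross _ _ _ _ w''y1 w'y3).
apply: (connect_trans (connect1 (cross _ _ _ _ wy1 w'y2 nwy2 nw'y1))).
by apply/connect1; rewrite topr_sym; apply: (cross _ _ _ _ wy3 w'y2).
Qed.

Definition tangle A B := [&& is_top A, is_bot B & matched A B].

Lemma tangleP A B : tangle A B -> [/\ is_component topr A, (1 < #|A|)%N,
  is_component botr B, (1 < #|B|)%N & matched A B].
Proof. by case/and3P => /andP[? ?] /andP[? ?]. Qed.

Lemma matched_crossing A B : matched A B -> exists a1 a2 b1 b2,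
  [/\ a1 \in A, a2 \in A, b1 \in B, b2 \in B & crossing b1 a1 b2 a2].
Proof.
case/existsP => a1 /andP[a1A /existsP[a2 /andP[a2A /existsP[b1 /andP[b1B
  /existsP[b2 /andP[b2B /and5P[_ _ b1a1 b2a2 /and4P[_ _ nb1a2 nb2a1]]]]]]]]].
exists a1, a2, b1, b2; split => //; apply/and4P; split => //.
  by apply: contra nb1a2; apply: lt_comparable.
by apply: contra nb2a1; apply: lt_comparable.
Qed.

Lemma tangle_crossing_bot A B y w w' y' : tangle A B -> y \in A -> crossing w y w' y' -> w \in B.
Proof.
case/tangleP => cA _ cB _ /matched_crossing[a1 [a2 [b1 [b2 [a1A _ b1B _ cr1]]]]] yA.
move: w w' y'; apply: (component_ind topr_sym (P := fun y => forall w w' y',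
  crossing w y w' y' -> w \in B) cA a1A _ _ yA).
  move=> w w' y' cr.
  exact: (component_connect botr_sym cB b1B (crossing_top_connect cr1 cr)).
move=> u v _ Pu /toprP[w0 [w0' cr0]] w w' y' cr.
have w0'B : w0' \in B.
  by apply: (component_closed botr_sym cB (Pu _ _ _ cr0)); apply/botrP; exists u, v.
rewrite crossingC in cr0.
exact: (component_connect botr_sym cB w0'B (crossing_top_connect cr0 cr)).
Qed.

Lemma tangle_crossing_top A B w y w' y' : tangle A B -> w \in B -> crossing w y w' y' -> y \in A.
Proof.
case/tangleP => cA _ cB _ /matched_crossing[a1 [a2 [b1 [b2 [a1A _ b1B _ cr1]]]]] wB.
move: y w' y'; apply: (component_ind botr_sym (P := fun w => forall y w' y',
  crossing w y w' y' -> y \in A) cB b1B _ _ wB).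
  move=> y w' y' cr.
  exact: (component_connect topr_sym cA a1A (crossing_bot_connect cr1 cr)).
move=> u v _ Pu /botrP[y0 [y0' cr0]] y w' y' cr.
have y0'A : y0' \in A.
  by apply: (component_closed topr_sym cA (Pu _ _ _ cr0)); apply/toprP; exists u, v.
rewrite crossingC in cr0.
exact: (component_connect topr_sym cA y0'A (crossing_bot_connect cr0 cr)).
Qed.

Lemma tangle_bot_unique A B1 B2 : tangle A B1 -> tangle A B2 -> B1 = B2.
Proof.
move=> t1 t2; have [_ _ cB1 _ _] := tangleP t1.
case/tangleP: t2 => _ _ cB2 _ /matched_crossing[a1 [a2 [b1 [b2 [a1A _ b1B2 _ cr]]]]].
exact: (component_eq botr_sym cB1 cB2 (tangle_crossing_bot t1 a1A cr) b1B2).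
Qed.

Lemma tangle_top_unique A1 A2 B : tangle A1 B -> tangle A2 B -> A1 = A2.
Proof.
move=> t1 t2; have [cA1 _ _ _ _] := tangleP t1.
case/tangleP: t2 => cA2 _ _ _ /matched_crossing[a1 [a2 [b1 [b2 [a1A2 _ b1B _ cr]]]]].
exact: (component_eq topr_sym cA1 cA2 (tangle_crossing_top t1 b1B cr) a1A2).
Qed.

Lemma tangle_top_crossing A B y : tangle A B -> y \in A ->
  exists w w' y', [/\ crossing w y w' y', w \in B, w' \in B & y' \in A].
Proof.
move=> t yA; have [cA nA cB _ _] := tangleP t.
have [y' yy'] := component_nbr topr_sym cA nA yA; have /toprP[w [w' cr]] := yy'.
have wB := tangle_crossing_bot t yA cr.
exists w, w', y'; split => //; first exact: (component_closed botr_sym cB wB (crossing_botr cr)).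
exact: (component_closed topr_sym cA yA yy').
Qed.

Lemma tangle_bot_crossing A B w : tangle A B -> w \in B ->
  exists y y' w', [/\ crossing w y w' y', y \in A, y' \in A & w' \in B].
Proof.
move=> t wB; have [cA _ cB nB _] := tangleP t.
have [w' ww'] := component_nbr botr_sym cB nB wB; have /botrP[y [y' cr]] := ww'.
have yA := tangle_crossing_top t wB cr.
exists y, y', w'; split => //; first exact: (component_closed topr_sym cA yA (crossing_topr cr)).
exact: (component_closed botr_sym cB wB ww').
Qed.

Lemma tangle_top_bot A1 B1 A2 B2 z : tangle A1 B1 -> tangle A2 B2 -> z \in A1 -> z \in B2 -> False.
Proof.
move=> t1 t2 zA1 zB2.
have [w [_ [y [/crossing_topr zy _ _ _]]]] := tangle_top_crossing t1 zA1.
have [y' [_ [w' [/crossing_botr zw _ _ _]]]] := tangle_bot_crossing t2 zB2.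
exact: topr_botr zy zw.
Qed.

Lemma tangle_eq A1 B1 A2 B2 z : tangle A1 B1 -> tangle A2 B2 ->
  z \in A1 :|: B1 -> z \in A2 :|: B2 -> A1 = A2 /\ B1 = B2.
Proof.
move=> t1 t2; have [cA1 _ cB1 _ _] := tangleP t1; have [cA2 _ cB2 _ _] := tangleP t2.
rewrite !inE => /orP[z1|z1] /orP[z2|z2].
- have eA := component_eq topr_sym cA1 cA2 z1 z2.
  by subst A2; split => //; apply: tangle_bot_unique t1 t2.
- by case: (tangle_top_bot t1 t2 z1 z2).
- by case: (tangle_top_bot t2 t1 z2 z1).
- have eB := component_eq botr_sym cB1 cB2 z1 z2.
  by subst B2; split => //; apply: tangle_top_unique t1 t2.
Qed.

Lemma tangle_level A B u v : tangle A B -> u \in A -> v \in B -> level u = (level v).+1.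
Proof.
case/tangleP => cA _ cB _ /matched_crossing[a1 [a2 [b1 [b2 [a1A _ b1B _ cr]]]]] uA vB.
rewrite (component_const topr_sym cA (fun u v _ => @topr_level u v) uA a1A).
rewrite (component_const botr_sym cB (fun u v _ => @botr_level u v) vB b1B).
by have [] := crossing_level cr.
Qed.

Lemma crossing_matched A B a1 a2 b1 b2 : a1 \in A -> a2 \in A -> b1 \in B -> b2 \in B ->
  crossing b1 a1 b2 a2 -> matched A B.
Proof.
move=> a1A a2A b1B b2B cr; have [la lb lab] := crossing_level cr.
have a12 : a1 != a2 by apply: contraTneq (crossing_topr cr) => ->; rewrite toprxx.
have b12 : b1 != b2 by apply: contraTneq (crossing_botr cr) => ->; rewrite botrxx.
case/and4P: (cr) => b1a1 b2a2 nb1a2 nb2a1.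
apply/existsP; exists a1; rewrite a1A; apply/existsP; exists a2; rewrite a2A.
apply/existsP; exists b1; rewrite b1B; apply/existsP; exists b2; rewrite b2B /=.
rewrite a12 b12 b1a1 b2a2 /=; apply/and4P; split.
- exact: incomparable_eq_level.
- exact: incomparable_eq_level.
- by rewrite incomparable_ltn_level // -la lab.
- by rewrite incomparable_ltn_level // lab lb.
Qed.

Lemma crossing_tangle w y w' y' : crossing w y w' y' ->
  exists A B, [/\ tangle A B, y \in A, y' \in A, w \in B & w' \in B].
Proof.
move=> cr; have yy' := crossing_topr cr; have ww' := crossing_botr cr.
exists [set v | connect topr y v], [set v | connect botr w v].
rewrite !inE !connect0 !connect1 //; split => //; apply/and3P; split.
- rewrite /is_top is_component_connect andbT; apply/card_gt1P; exists y, y'.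
  by rewrite !inE connect0 connect1 //; split => //; apply: contraTneq yy' => ->; rewrite toprxx.
- rewrite /is_bot is_component_connect andbT; apply/card_gt1P; exists w, w'.
  by rewrite !inE connect0 connect1 //; split => //; apply: contraTneq ww' => ->; rewrite botrxx.
- by apply: (crossing_matched _ _ _ _ cr); rewrite inE ?connect0 ?connect1.
Qed.

Lemma topr_tangle y y' : topr y y' -> exists A B, [/\ tangle A B, y \in A & y' \in A].
Proof. by case/toprP => w [w' /crossing_tangle[A [B [t yA y'A _ _]]]]; exists A, B. Qed.

Lemma botr_tangle w w' : botr w w' -> exists A B, [/\ tangle A B, w \in B & w' \in B].
Proof. by case/botrP => y [y' /crossing_tangle[A [B [t _ _ wB w'B]]]]; exists A, B. Qed.

Lemma in_tangleP x : reflect (exists A B, tangle A B /\ x \in A :|: B) (in_tangle x).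
Proof.
apply: (iffP existsP) => [[X /andP[/existsP[A /existsP[B /and4P[tA bB m /eqP->]]] xX]]|
                          [A [B [t xAB]]]].
  by exists A, B; split => //; apply/and3P.
exists (A :|: B); rewrite xAB andbT; apply/existsP; exists A; apply/existsP; exists B.
by rewrite eqxx andbT.
Qed.

Lemma is_tangleP X : reflect (exists A B, tangle A B /\ X = A :|: B) (is_tangle X).
Proof.
apply: (iffP existsP) => [[A /existsP[B /and4P[tA bB m /eqP->]]]|[A [B [t ->]]]].
  by exists A, B; split => //; apply/and3P.
by exists A; apply/existsP; exists B; rewrite eqxx andbT.
Qed.

(** * Parts *)

Lemma approx_refl x : approx x x.
Proof. by rewrite /approx !eqxx. Qed.

Lemma approx_sym x y : approx x y = approx y x.
Proof. by rewrite /approx eq_sym [Uset x == _]eq_sym. Qed.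

Lemma approx_trans y x z : approx x y -> approx y z -> approx x z.
Proof. by rewrite /approx => /andP[/eqP-> /eqP->]. Qed.

Definition same_part x y :=
  [exists A, exists B, [&& tangle A B, x \in A :|: B & y \in A :|: B]]
  || [&& ~~ in_tangle x, ~~ in_tangle y & approx x y].

Lemma same_part_tangle A B x y : tangle A B -> x \in A :|: B -> same_part x y = (y \in A :|: B).
Proof.
move=> t xAB; apply/idP/idP => [|yAB].
  case/orP => [/existsP[A' /existsP[B' /and3P[t' xAB' yAB']]]|/and3P[nx _ _]].
    by have [<- <-] := tangle_eq t' t xAB' xAB.
  by case/in_tangleP: nx; exists A, B.
by apply/orP; left; apply/existsP; exists A; apply/existsP; exists B; apply/and3P.
Qed.

Lemma same_part_clone x y : ~~ in_tangle x -> same_part x y = ~~ in_tangle y && approx x y.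
Proof.
move=> nx; rewrite /same_part nx /=; case: existsP => //= -[A /existsP[B /and3P[t xAB _]]].
by case/in_tangleP: nx; exists A, B.
Qed.

Lemma same_part_refl x : same_part x x.
Proof.
have [/in_tangleP[A [B [t xAB]]]|nx] := boolP (in_tangle x).
  by rewrite (same_part_tangle _ t xAB).
by rewrite same_part_clone // nx approx_refl.
Qed.

Lemma same_partC x y : same_part x y = same_part y x.
Proof.
rewrite /same_part approx_sym [~~ in_tangle x && _]andbCA; congr (_ || _).
apply/existsP/existsP => -[A /existsP[B /and3P[t ? ?]]];
  by exists A; apply/existsP; exists B; apply/and3P.
Qed.

Lemma same_part_trans y x z : same_part x y -> same_part y z -> same_part x z.
Proof.
have [/in_tangleP[A [B [t yAB]]]|ny] := boolP (in_tangle y).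
  rewrite same_partC !(same_part_tangle _ t yAB) => xAB.
  by rewrite (same_part_tangle _ t xAB).
rewrite same_partC !(same_part_clone _ ny) => /andP[nx yx] /andP[nz yz].
by rewrite same_part_clone // nz (approx_trans _ yz) // approx_sym.
Qed.

Lemma topr_same_part y y' : topr y y' -> same_part y y'.
Proof. by case/topr_tangle => A [B [t yA y'A]]; rewrite (same_part_tangle _ t) !inE ?yA ?y'A. Qed.

Lemma botr_same_part w w' : botr w w' -> same_part w w'.
Proof.
by case/botr_tangle => A [B [t wB w'B]]; rewrite (same_part_tangle _ t) !inE ?wB ?w'B ?orbT.
Qed.

Lemma approx_tangle A B x y : tangle A B -> x \in A :|: B -> approx x y -> y \in A :|: B.
Proof.
move=> t + /andP[/eqP Dxy /eqP Uxy]; have [cA nA cB nB _] := tangleP t.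
rewrite !inE => /orP[xA|xB]; apply/orP; [left|right].
  have [z xz] := component_nbr topr_sym cA nA xA.
  have zA := component_closed topr_sym cA xA xz.
  by apply: (component_closed topr_sym cA zA); rewrite topr_sym /topr -Dxy.
have [z xz] := component_nbr botr_sym cB nB xB.
have zB := component_closed botr_sym cB xB xz.
by apply: (component_closed botr_sym cB zB); rewrite botr_sym /botr -Uxy.
Qed.

Lemma approx_same_part x y : approx x y -> same_part x y.
Proof.
move=> xy; have [/in_tangleP[A [B [t xAB]]]|nx] := boolP (in_tangle x).
  by rewrite (same_part_tangle _ t xAB) (approx_tangle t xAB).
have [/in_tangleP[A [B [t yAB]]]|ny] := boolP (in_tangle y).
  by rewrite same_partC (same_part_tangle _ t yAB) (approx_tangle t yAB) // approx_sym.
by rewrite same_part_clone // ny.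
Qed.

Lemma same_part_level x y : same_part x y -> level x = level y -> approx x y \/
  exists A B, tangle A B /\ (x \in A /\ y \in A \/ x \in B /\ y \in B).
Proof.
case/orP => [/existsP[A /existsP[B /and3P[t xAB yAB]]]|/and3P[_ _ xy]] lxy; last by left.
right; exists A, B; split => //.
move: xAB yAB; rewrite !inE => /orP[xA|xB] /orP[yA|yB]; try by [left|right].
  by move: lxy; rewrite (tangle_level t xA yB) => /esym/n_Sn.
by move: lxy; rewrite (tangle_level t yA xB) => /n_Sn.
Qed.

Definition is_part S := is_clone S || is_tangle S.

Lemma part_mem S x y : is_part S -> x \in S -> (y \in S) = same_part x y.
Proof.
case/orP => [/existsP[x0 /andP[nx0 /eqP->]]|/is_tangleP[A [B [t ->]]]] xS; last first.
  by rewrite (same_part_tangle _ t xS).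
move: xS; rewrite !inE => /andP[nx x0x]; rewrite same_part_clone //; congr (_ && _).
by apply/idP/idP; [apply: approx_trans; rewrite approx_sym | apply: approx_trans].
Qed.

Lemma part_eq S S' x y : is_part S -> is_part S' -> x \in S -> y \in S' -> same_part x y -> S = S'.
Proof.
move=> pS pS' xS yS' sxy; apply/setP => z; rewrite (part_mem z pS xS) (part_mem z pS' yS').
apply/idP/idP => [xz|]; last exact: same_part_trans.
by apply: (same_part_trans _ xz); rewrite same_partC.
Qed.

Lemma tangle_Uset A B u v : tangle A B -> u \in A -> v \in A -> Uset u = Uset v.
Proof.
by case/tangleP => cA _ _ _ _; apply: (component_const topr_sym (f := Uset) cA) => a b _ /topr_Uset.
Qed.

Lemma tangle_Dset A B u v : tangle A B -> u \in B -> v \in B -> Dset u = Dset v.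
Proof.
by case/tangleP => _ _ cB _ _; apply: (component_const botr_sym (f := Dset) cB) => a b _ /botr_Dset.
Qed.

Lemma tangle_top_side A B x' : tangle A B -> x' \notin A ->
  {in A &, forall u v, (Dset u \subset Dset x') = (Dset v \subset Dset x')}.
Proof.
move=> t x'A u v uA vA; have [cA _ _ _ _] := tangleP t.
have cmp z : z \in A -> (Dset z \subset Dset x') || (Dset x' \subset Dset z).
  move=> zA; rewrite -[_ || _]negbK negb_or -/(topr z x'); apply: contra x'A.
  exact: (component_closed topr_sym cA zA).
apply: (component_const topr_sym (f := fun z => Dset z \subset Dset x') cA _ uA vA) => a b aA ab.
have bA := component_closed topr_sym cA aA ab.
case/andP: ab => nab nba; apply/idP/idP => [ax|bx].
  by case/orP: (cmp b bA) => // xb; rewrite (subset_trans ax xb) in nab.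
by case/orP: (cmp a aA) => // xa; rewrite (subset_trans bx xa) in nba.
Qed.

Lemma tangle_bot_side A B x' : tangle A B -> x' \notin B ->
  {in B &, forall u v, (Uset x' \subset Uset u) = (Uset x' \subset Uset v)}.
Proof.
move=> t x'B u v uB vB; have [_ _ cB _ _] := tangleP t.
have cmp z : z \in B -> (Uset z \subset Uset x') || (Uset x' \subset Uset z).
  move=> zB; rewrite -[_ || _]negbK negb_or -/(botr z x'); apply: contra x'B.
  exact: (component_closed botr_sym cB zB).
apply: (component_const botr_sym (f := fun z => Uset x' \subset Uset z) cB _ uB vB) => a b aB ab.
have bB := component_closed botr_sym cB aB ab.
case/andP: ab => nab nba; apply/idP/idP => [xa|xb].
  by case/orP: (cmp b bB) => // bx; rewrite (subset_trans bx xa) in nba.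
by case/orP: (cmp a aB) => // ax; rewrite (subset_trans ax xb) in nab.
Qed.

(** * The parts of one level *)

(* [x'] has to come after [x] in the listing. *)
Definition before x x' := ~~ (Dset x' \subset Dset x) || ~~ (Uset x \subset Uset x').

Lemma beforeP x x' : reflect ((exists2 w, w < x' & ~~ (w < x)) \/ (exists2 c, x < c & ~~ (x' < c)))
  (before x x').
Proof.
apply: (iffP orP) => [[/subsetPn[w wx' nwx]|/subsetPn[c xc nx'c]]|[[w wx' nwx]|[c xc nx'c]]].
- by rewrite !inE in wx' nwx; left; exists w.
- by rewrite !inE in xc nx'c; right; exists c.
- by left; apply/subsetPn; exists w; rewrite inE.
- by right; apply/subsetPn; exists c; rewrite inE.
Qed.

Lemma before_total x x' : ~~ same_part x x' -> before x x' || before x' x.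
Proof.
apply: contraR; rewrite negb_or /before !negb_or !negbK => /andP[/andP[D1 U1] /andP[D2 U2]].
by apply: approx_same_part; rewrite /approx !eqEsubset D1 U1 D2 U2.
Qed.

Lemma before_trans x' x x'' : level x = level x' -> ~~ same_part x x' ->
  before x x' -> before x' x'' -> before x x''.
Proof.
move=> lxx' nxx' bxx' bx'x''; apply/negPn/negP.
rewrite negb_or !negbK => /andP[/subsetP Dx''x /subsetP Uxx''].
have below u : u < x'' -> u < x by have := Dx''x u; rewrite !inE.
have above u : x < u -> x'' < u by have := Uxx'' u; rewrite !inE.
case/beforeP: bxx' => [[w wx' nwx]|[c xc nx'c]];
  case/beforeP: bx'x'' => [[w' /below w'x nw'x']|[c' x'c' /(contra (above c')) nxc']].
- by case/negP: nxx'; apply/topr_same_part/(@crossing_topr w' _ w); apply/and4P.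
- by have := free31_level (esym lxx') wx' x'c'; rewrite (negbTE nwx) (negbTE nxc').
- by have := free31_level lxx' w'x xc; rewrite (negbTE nw'x') (negbTE nx'c).
- by case/negP: nxx'; apply/botr_same_part/(@crossing_botr _ c _ c'); apply/and4P.
Qed.

Lemma before_asym x x' : level x = level x' -> ~~ same_part x x' -> before x x' -> ~~ before x' x.
Proof.
move=> lxx' nxx' bxx'; apply/negP => /(before_trans lxx' nxx' bxx').
by rewrite /before !subxx.
Qed.

Lemma before_same_part x y x' : level x = level y -> same_part x y -> ~~ same_part x' x ->
  before x' x = before x' y.
Proof.
move=> lxy sxy nx'x.
case: (same_part_level sxy lxy) => [/andP[/eqP Dxy /eqP Uxy]|[A [B [t xy]]]].
  by rewrite /before Dxy Uxy.
have : x' \notin A :|: B.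
  apply: contra nx'x => x'AB; rewrite (same_part_tangle _ t x'AB) inE.
  by case: xy => -[-> _]; rewrite ?orbT.
rewrite inE negb_or => /andP[x'A x'B]; case: xy => -[xS yS]; rewrite /before.
  by rewrite (tangle_Uset t xS yS) (tangle_top_side t x'A xS yS).
by rewrite (tangle_Dset t xS yS) (tangle_bot_side t x'B xS yS).
Qed.

Definition rank x := #|[set x' | [&& level x' == level x, before x' x & ~~ same_part x' x]]|.

Lemma rank_same_part x y : level x = level y -> same_part x y -> rank x = rank y.
Proof.
move=> lxy sxy; apply: eq_card => x'; rewrite !inE lxy.
have [sx'x|nx'x] := boolP (same_part x' x).
  by rewrite (same_part_trans sx'x sxy) !andbF.
have nx'y : ~~ same_part x' y by apply: contra nx'x => /same_part_trans; apply; rewrite same_partC.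
rewrite nx'y !andbT; case: eqP => //= lx'y.
exact: before_same_part.
Qed.

Lemma rank_lt x y : level x = level y -> ~~ same_part x y -> before x y -> (rank x < rank y)%N.
Proof.
move=> lxy nxy bxy; apply: proper_card; apply/properP; split.
  apply/subsetP => x'; rewrite !inE => /and3P[/eqP lx'x bx'x nx'x].
  rewrite lx'x lxy eqxx (before_trans _ nx'x bx'x bxy) ?lx'x //=.
  apply: contra (before_asym lx'x nx'x bx'x) => sx'y.
  by rewrite (@before_same_part x' y x) ?lx'x // same_partC.
exists x; first by rewrite inE lxy eqxx bxy nxy.
by rewrite inE same_part_refl !andbF.
Qed.

Lemma ltn_rankE x y : level x = level y -> (rank x < rank y)%N = before x y && ~~ same_part x y.
Proof.
move=> lxy; apply/idP/idP => [|/andP[bxy nxy]]; last exact: rank_lt.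
have [sxy|nxy] := boolP (same_part x y); first by rewrite (rank_same_part lxy sxy) ltnn.
case/orP: (before_total nxy) => [-> //|byx].
have nyx : ~~ same_part y x by rewrite same_partC.
by rewrite ltnNge ltnW // (rank_lt (esym lxy) nyx byx).
Qed.

Lemma eqn_rankE x y : level x = level y -> (rank x == rank y) = same_part x y.
Proof.
move=> lxy; apply/eqP/idP => [rxy|]; last exact: rank_same_part.
apply/negPn/negP => nxy; have nyx : ~~ same_part y x by rewrite same_partC.
case/orP: (before_total nxy) => [/(rank_lt lxy nxy)|/(rank_lt (esym lxy) nyx)].
  by rewrite rxy ltnn.
by rewrite rxy ltnn.
Qed.

(** * Parents and keys *)

Definition lower_cover y := [pred w | (w < y) && ((level w).+1 == level y)].

(* On the first level, which has no lower covers, [parent y] is the junk value [y]. *)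
Definition parent y :=
  if [pick w | lower_cover y w] is Some w0 then arg_max w0 (lower_cover y) rank else y.

Lemma parent_spec y : (1 < level y)%N -> [/\ parent y < y, (level (parent y)).+1 = level y &
  forall w, w < y -> (level w).+1 = level y -> (rank w <= rank (parent y))%N].
Proof.
move=> ly; have [w wy lw] := @level_cover _ _ (level y - 2) y ltac:(lia).
have {}lw : (level w).+1 = level y by lia.
rewrite /parent; case: pickP => [w0 w0y|]; last by move/(_ w); rewrite /= wy lw eqxx.
case: (arg_maxnP rank (P := lower_cover y) w0y) => p /andP[py /eqP lp] pmax; split => // w' w'y lw'.
by apply: pmax; rewrite /= w'y lw' eqxx.
Qed.

Lemma tangle_bot_lt A B u v y : tangle A B -> u \in B -> v \in B -> y \notin A -> u < y -> v < y.
Proof.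
move=> t uB vB yA uy; have [_ _ cB _ _] := tangleP t.
apply: (component_ind botr_sym (P := fun v => v < y) cB uB uy) vB => a b aB ay /botrP[c [c' cr]].
apply/negPn/negP => nby; case/and4P: cr => _ bc' nac' _.
by case/negP: yA; apply: (tangle_crossing_top t aB (w' := b) (y' := c')); apply/and4P.
Qed.

Lemma lt_parentE x y : (level x).+1 = level y -> ~~ same_part x y ->
  (x < y) = (rank x <= rank (parent y))%N.
Proof.
move=> lxy nxy; have ly : (1 < level y)%N by rewrite -lxy ltnS level_gt0.
have [py lpy pmax] := parent_spec ly.
have lxp : level x = level (parent y) by apply/succn_inj; rewrite lpy.
apply/idP/idP => [xy|]; first exact: pmax.
rewrite leq_eqVlt eqn_rankE // => /orP[sxp|]; last first.
  rewrite ltn_rankE // => /andP[bxp nxp]; apply/negPn/negP => nxy'.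
  suff : before (parent y) x by rewrite (negbTE (before_asym lxp nxp bxp)).
  by apply/beforeP; right; exists y.
have yUp : y \in Uset (parent y) by rewrite inE.
case: (same_part_level sxp lxp) => [/andP[_ /eqP Uxp]|[A [B [t [[xA pA]|[xB pB]]]]]].
- by move: yUp; rewrite -Uxp inE.
- by move: yUp; rewrite -(tangle_Uset t xA pA) inE.
- apply: (tangle_bot_lt t pB xB _ py); apply: contra nxy => yA.
  by rewrite (same_part_tangle _ t) !inE ?xB ?yA ?orbT.
Qed.

Lemma rank_lt_bot_cover A B w0 y w0' y' w : tangle A B -> crossing w0 y w0' y' ->
  w0 \in B -> w0' \in B -> w < y -> level w = level w0 -> w \notin B -> (rank w < rank w0)%N.
Proof.
move=> t cr w0B w0'B wy lww0 wB; have [_ _ cB _ _] := tangleP t.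
have nww0 : ~~ same_part w w0.
  rewrite same_partC (same_part_tangle _ t) !inE ?w0B ?orbT // (negbTE wB) orbF.
  by apply/negP => /(tangle_level t)/(_ w0B); rewrite lww0 => /n_Sn.
case/and4P: (cr) => w0y w0'y' nw0y' nw0'y.
have wy' : w < y'.
  apply/negPn/negP => nwy'; case/negP: wB; apply: (component_closed botr_sym cB w0'B).
  by rewrite botr_sym; apply: (@crossing_botr _ y _ y'); apply/and4P.
apply: (rank_lt lww0 nww0); case/orP: (before_total nww0) => // /beforeP[[v vw nvw0]|[c w0c nwc]].
  by have := free31_level lww0 vw wy'; rewrite (negbTE nvw0) (negbTE nw0y').
have : ~~ botr w0 w by apply: contra wB; apply: (component_closed botr_sym cB w0B).
rewrite /botr negb_and !negbK => /orP[/subsetP Uw0w|/subsetP Uww0].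
  by have := Uw0w c; rewrite !inE w0c (negbTE nwc) => /(_ isT).
by have := Uww0 y'; rewrite !inE wy' (negbTE nw0y') => /(_ isT).
Qed.

Lemma parent_top A B y : tangle A B -> y \in A -> parent y \in B.
Proof.
move=> t yA; have [w0 [w0' [y' [cr w0B w0'B _]]]] := tangle_top_crossing t yA.
have [_ _ lyw0] := crossing_level cr.
have ly : (1 < level y)%N by rewrite lyw0 ltnS level_gt0.
have [py lpy pmax] := parent_spec ly.
apply/negPn/negP => pB; have w0y : w0 < y by case/and4P: cr.
have := rank_lt_bot_cover t cr w0B w0'B py (succn_inj (etrans lpy lyw0)) pB.
by rewrite ltnNge pmax.
Qed.

Lemma rank_top_lt A B a w : tangle A B -> a \in A -> level w = level a ->
  ~~ same_part w a -> parent w \in B -> (rank a < rank w)%N.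
Proof.
move=> t aA lwa nwa pB; have [cA _ _ _ _] := tangleP t.
have lw : (1 < level w)%N by rewrite lwa (tangle_level t aA pB) ltnS level_gt0.
have [pw _ _] := parent_spec lw; set b := parent w in pB pw.
have [c [c' [_ [/and4P[_ _ nbc' _] _ c'A _]]]] := tangle_bot_crossing t pB.
have wA : w \notin A by apply: contra nwa => wA; rewrite (same_part_tangle _ t) !inE ?wA ?aA.
have lc'w : level c' = level w by rewrite lwa (tangle_level t c'A pB) (tangle_level t aA pB).
have sac' : same_part a c' by rewrite (same_part_tangle _ t) !inE ?aA ?c'A.
rewrite (rank_same_part (etrans (esym lwa) (esym lc'w)) sac').
have nc'w : ~~ same_part c' w.
  rewrite (same_part_tangle _ t) !inE ?c'A // (negbTE wA) /=.
  by apply/negP => /(tangle_level t c'A); rewrite lc'w => /n_Sn.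
apply: (rank_lt lc'w nc'w); case/orP: (before_total nc'w) => // /beforeP[[v vc' nvw]|[z wz nc'z]].
  have : ~~ topr c' w by apply: contra wA; apply: (component_closed topr_sym cA c'A).
  rewrite /topr negb_and !negbK => /orP[/subsetP Dc'w|/subsetP Dwc'].
    by have := Dc'w v; rewrite !inE vc' (negbTE nvw) => /(_ isT).
  by have := Dwc' b; rewrite !inE pw (negbTE nbc') => /(_ isT).
by have := free31_level (esym lc'w) pw wz; rewrite (negbTE nbc') (negbTE nc'z).
Qed.

Lemma leq_rank_parent x y : level x = level y -> (1 < level x)%N ->
  (rank x <= rank y)%N -> (rank (parent x) <= rank (parent y))%N.
Proof.
move=> lxy lx; have ly : (1 < level y)%N by rewrite -lxy.
have [px lpx _] := parent_spec lx; have [_ lpy pmax] := parent_spec ly.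
have lpxy : (level (parent x)).+1 = level y by rewrite lpx.
rewrite leq_eqVlt eqn_rankE // => /orP[sxy|]; last first.
  rewrite ltn_rankE // => /andP[bxy nxy]; rewrite leqNgt; apply/negP => ltp.
  have [pxy|npxy] := boolP (parent x < y); first by rewrite ltnNge pmax in ltp.
  suff : before y x by rewrite (negbTE (before_asym lxy nxy bxy)).
  by apply/beforeP; left; exists (parent x).
have eqD : Dset x = Dset y -> (rank (parent x) <= rank (parent y))%N.
  move=> Dxy; apply: pmax lpxy; have : parent x \in Dset y by rewrite -Dxy inE.
  by rewrite inE.
case: (same_part_level sxy lxy) => [/andP[/eqP Dxy _]|[A [B [t [[xA yA]|[xB yB]]]]]].
- exact: eqD.
- have lp : level (parent x) = level (parent y) by apply: succn_inj; rewrite lpx lpy.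
  have pxAB : parent x \in A :|: B by rewrite inE (parent_top t xA) orbT.
  by rewrite leq_eqVlt eqn_rankE // (same_part_tangle _ t pxAB) inE (parent_top t yA) orbT.
- exact/eqD/(tangle_Dset t).
Qed.

Lemma ltn_rank_parent_top A B a w : tangle A B -> a \in A -> level w = level a ->
  (rank w < rank a)%N -> (rank (parent w) < rank (parent a))%N.
Proof.
move=> t aA lwa ltwa; have paB := parent_top t aA; have lap := tangle_level t aA paB.
have lw : (1 < level w)%N by rewrite lwa lap ltnS level_gt0.
have [_ lpw _] := parent_spec lw.
have lpp : level (parent w) = level (parent a) by apply: succn_inj; rewrite lpw lwa lap.
move: (leq_rank_parent lwa lw (ltnW ltwa)); rewrite leq_eqVlt eqn_rankE // => /orP[spp|//].
have pwB : parent w \in B.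
  move: spp; rewrite same_partC (same_part_tangle _ t) !inE ?paB ?orbT // => /orP[|//].
  by move/(tangle_level t)/(_ paB); rewrite lpp => /n_Sn.
have nwa : ~~ same_part w a by move: ltwa; rewrite ltn_rankE // => /andP[].
by move: (rank_top_lt t aA lwa nwa pwB); rewrite ltnNge (ltnW ltwa).
Qed.

Fixpoint ranks_up n x : seqlexi nat :=
  if n is n'.+1 then rcons (ranks_up n' (parent x)) (rank x) else [::].

Definition rank_path x := ranks_up (level x) x.

Lemma rank_pathS x : (1 < level x)%N -> rank_path x = rank_path (parent x) ++ [:: rank x].
Proof.
move=> lx; have [_ lp _] := parent_spec lx.
by rewrite /rank_path -lp /= cats1.
Qed.

Lemma size_rank_path x : size (rank_path x) = level x.
Proof.
by rewrite /rank_path; move: (level x) => n; elim: n x => //= n IH x; rewrite size_rcons IH.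
Qed.

Lemma lexi_rank_path x y : level x = level y -> (rank_path x <= rank_path y) = (rank x <= rank y)%N.
Proof.
elim: {x}(level x) {-2}x y (erefl (level x)) => [|n IH] x y lx lxy.
  by have := level_gt0 x; rewrite lx.
case: n IH lx lxy => [|n] IH lx lxy.
  by rewrite /rank_path -lxy lx /= lexi_cons lexi0s implybT andbT leEnat.
have lx1 : (1 < level x)%N by rewrite lx.
have ly1 : (1 < level y)%N by rewrite -lxy lx.
have [_ lpx _] := parent_spec lx1; have [_ lpy _] := parent_spec ly1.
have lpx' : level (parent x) = n.+1 by apply: succn_inj; rewrite lpx lx.
have lpxy : level (parent x) = level (parent y) by apply: succn_inj; rewrite lpx lpy lxy.
rewrite (rank_pathS lx1) (rank_pathS ly1) lexi_cat ?size_rank_path //.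
rewrite ltNge eq_le !IH // ?lpx' -?lpxy // lexi_cons lexi0s implybT andbT leEnat.
case: (leqP (rank x) (rank y)) => [rxy|ryx].
  by rewrite andbT -eqn_leq -ltnNge orbC -leq_eqVlt (leq_rank_parent lxy).
by rewrite andbF orbF (leq_rank_parent (esym lxy)) // ltnW.
Qed.

Lemma ltxi_rank_path x y : level x = level y -> (rank_path x < rank_path y) = (rank x < rank y)%N.
Proof. by move=> lxy; rewrite ltNge lexi_rank_path // ltnNge. Qed.

Lemma eq_rank_path x y : level x = level y -> (rank_path x == rank_path y) = (rank x == rank y).
Proof. by move=> lxy; rewrite eq_le !lexi_rank_path // eqn_leq. Qed.

Definition in_top x := [exists A, exists B, tangle A B && (x \in A)].

Lemma in_topP x : reflect (exists A B, tangle A B /\ x \in A) (in_top x).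
Proof.
apply: (iffP existsP) => [[A /existsP[B /andP[t xA]]]|[A [B [t xA]]]]; first by exists A, B.
by exists A; apply/existsP; exists B; rewrite t xA.
Qed.

(* A top of a tangle is keyed by its parent, which lies in the bottom of the same tangle
   (parent_top); hence all elements of a part share their key (key_same_part). *)
Definition key x := rank_path (if in_top x then parent x else x).

Lemma key_cover a b : (level a).+1 = level b -> ~~ same_part a b ->
  if a < b then key a < key b else key b < key a.
Proof.
move=> lab nab; have lb : (1 < level b)%N by rewrite -lab ltnS level_gt0.
have [_ lpb _] := parent_spec lb.
have lpa : level (parent b) = level a by apply: succn_inj; rewrite lpb.
have keyb : key b = rank_path (parent b) ++ (if in_top b then [::] else [:: rank b]).
  by rewrite /key; case: ifP => _; [rewrite cats0 | rewrite (rank_pathS lb)].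
rewrite (lt_parentE lab nab) keyb /key; case: (in_topP a) => [[A [B [t aA]]]|na].
  have paB := parent_top t aA; have lpa1 := tangle_level t aA paB.
  have lpb1 : (1 < level (parent b))%N by rewrite lpa lpa1 ltnS level_gt0.
  have [_ lppb _] := parent_spec lpb1.
  have lpp : level (parent a) = level (parent (parent b)).
    by apply: succn_inj; rewrite lppb lpa lpa1.
  rewrite (rank_pathS lpb1) -catA -[rank_path (parent a)]cats0.
  rewrite !ltxi_cat ?size_rank_path // (ltxi_rank_path lpp) (ltxi_rank_path (esym lpp)).
  rewrite (eq_rank_path lpp) ltxi0s ltxis0 andbT andbF orbF.
  case: (leqP (rank a) (rank (parent b))) => [lea|lta].
    by rewrite orbC -leq_eqVlt leq_rank_parent // ?lpa1 ?ltnS ?level_gt0.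
  exact: ltn_rank_parent_top t aA lpa lta.
rewrite -[rank_path a]cats0 !ltxi_cat ?size_rank_path ?lpa // (ltxi_rank_path (esym lpa)).
rewrite (ltxi_rank_path lpa) (eq_rank_path (esym lpa)) ltxis0 andbF orbF ltxi0s.
case: (leqP (rank a) (rank (parent b))) => [|//]; rewrite leq_eqVlt => /orP[/eqP rab|->//].
rewrite rab eqxx ltnn /=; case: (in_topP b) => // -[A [B [t bA]]].
have : same_part a (parent b) by rewrite -eqn_rankE ?rab.
have pbAB : parent b \in A :|: B by rewrite inE (parent_top t bA) orbT.
rewrite same_partC (same_part_tangle _ t pbAB) => aAB.
by rewrite (same_part_tangle _ t aAB) inE bA in nab.
Qed.

Lemma key_tangle A B u b : tangle A B -> u \in A :|: B -> b \in B -> key u = rank_path b.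
Proof.
move=> t uAB bB.
have keyB v : v \in B -> rank_path v = rank_path b.
  move=> vB; have lvb := level_Dset (tangle_Dset t vB bB).
  by apply/eqP; rewrite eq_rank_path // eqn_rankE // (same_part_tangle _ t) !inE ?vB ?bB ?orbT.
move: uAB; rewrite inE /key => /orP[uA|uB].
  have -> : in_top u by apply/in_topP; exists A, B.
  exact: keyB (parent_top t uA).
have -> : in_top u = false.
  by apply/negbTE/in_topP => -[A' [B' [t' uA']]]; apply: tangle_top_bot t' t uA' uB.
exact: keyB.
Qed.

Lemma key_same_part x y : same_part x y -> key x = key y.
Proof.
case/orP => [/existsP[A /existsP[B /and3P[t xAB yAB]]]|/and3P[nx ny xy]].
  have [_ _ _ /card_gt1P[b [_ [bB _ _]]] _] := tangleP t.
  by rewrite (key_tangle t xAB bB) (key_tangle t yAB bB).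
have notop z : ~~ in_tangle z -> in_top z = false.
  move=> nz; apply/negbTE/in_topP => -[A [B [t zA]]]; case/in_tangleP: nz.
  by exists A, B; rewrite inE zA.
have lxy : level x = level y by apply: level_Dset; case/andP: xy => /eqP.
rewrite /key !notop //; apply/eqP; rewrite eq_rank_path // eqn_rankE //.
exact: approx_same_part.
Qed.

Definition part_key S : seqlexi nat := if [pick x in S] is Some x then key x else [::].

Lemma part_keyE S x : is_part S -> x \in S -> part_key S = key x.
Proof.
move=> pS xS; rewrite /part_key; case: pickP => [y yS|/(_ x)]; last by rewrite xS.
by apply: key_same_part; rewrite -(part_mem _ pS yS).
Qed.

End ThreePlusOneFree.

Theorem theorem3p3 (disp : Order.disp_t) (T : finPOrderType disp) :
  free31 (T := T) ->
  exists X : seq {set T},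
    [/\ uniq X,
        (forall S : {set T}, (S \in X) = is_clone S || is_tangle S) &
        forall (i j : nat) (a b : T),
          (i < size X)%N -> (j < size X)%N -> i != j ->
          a \in nth set0 X i -> b \in nth set0 X j ->
          (a < b) = ((level a + 2 <= level b)%N
                     || ((level a + 1 == level b)%N && (i < j)%N))].
Proof.
move=> free; pose X := sort (relpre (@part_key _ T) <=%O) (enum (@is_part _ T)).
have memX S : (S \in X) = is_part S by rewrite mem_sort mem_enum.
have sortX : sorted (relpre (@part_key _ T) <=%O) X.
  by apply: sort_sorted => S S'; apply: le_total.
exists X; split => [|//|i j a b iX jX ij aXi bXj]; first by rewrite sort_uniq enum_uniq.
have pXi : is_part (nth set0 X i) by rewrite -memX mem_nth.
have pXj : is_part (nth set0 X j) by rewrite -memX mem_nth.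
have nab : ~~ same_part a b.
  apply: contra ij => /(part_eq free pXi pXj aXi bXj) eXij.
  by rewrite -(nth_uniq set0 iX jX) ?eXij // sort_uniq enum_uniq.
case: (leqP (level a + 2) (level b)) => [gap|nogap]; first by rewrite level_gap_lt.
case: eqVneq => [lab|nlab] /=; last by apply/negbTE/nlt_level; lia.
have := key_cover free (etrans (esym (addn1 _)) lab) nab.
rewrite -(part_keyE free pXi aXi) -(part_keyE free pXj bXj).
case: ltngtP ij => // [lt_ij|lt_ji] _.
  by case: (a < b) => // /lt_geF; rewrite (sorted_relpre_nth _ sortX (ltnW lt_ij) jX).
by case: (a < b) => // /lt_geF; rewrite (sorted_relpre_nth _ sortX (ltnW lt_ji) iX).
Qed.
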